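(* Let $\mathbf{w}$ be a Sturmian word over $\{0,1\}$ and $k \in \mathbb{N}$. (1) Let $\mathbf{u} = \varphi_b^k(\mathbf{w})$. Then $0^k$ is a bispecial prefix of $\mathbf{u}$ and $\mathbf{d}_{\mathbf{u}}(0^k) = \mathbf{w}$ (up to a permutation of letters). (2) If $1\mathbf{w}$ is a Sturmian word, then $\varphi_a^k(1\mathbf{w}) = 1\varphi_b^k(\mathbf{w})$.
   Context: The morphisms on $\{0,1\}^*$ are $\varphi_a: 0 \mapsto 0, 1 \mapsto 10$ and $\varphi_b: 0 \mapsto 0, 1 \mapsto 01$, extended to infinite words letterwise. A Sturmian word is an infinite binary word having exactly $n+1$ factors of length $n$ for every $n$. A factor $v$ of $\mathbf{u}$ is right (left) special if $va, vb$ (resp. $av, bv$) are factors for two distinct letters $a \ne b$; bispecial if both. Derived word: for a uniformly recurrent word $\mathbf{u}$ and a factor $v$, a return word of $v$ is a factor $r$ such that $rv$ is a factor of $\mathbf{u}$ in which $v$ occurs exactly twice, as a prefix and as a suffix. If $r_0, \dots, r_k$ are all the return words of $v$, write $\mathbf{u} = p\, r_{s_0} r_{s_1} r_{s_2}\cdots$ where $|p|$ is the first occurrence of $v$ in $\mathbf{u}$; then $\mathbf{d}_{\mathbf{u}}(v) = s_0 s_1 s_2 \cdots$. Derived words are considered up to a permutation of letters; the derived word to the empty word is $\mathbf{u}$ itself. *)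

(* Letters: false = 0, true = 1. *)
From mathcomp Require Import all_boot.
Set Implicit Arguments. Unset Strict Implicit. Unset Printing Implicit Defensive.

Definition iword := nat -> bool.

Definition window (u : iword) (i n : nat) : seq bool := mkseq (fun j => u (i + j)) n.

Definition occursAt (u : iword) (v : seq bool) (i : nat) : bool := window u i (size v) == v.

Definition factor (u : iword) (v : seq bool) : Prop := exists i, occursAt u v i.
Definition is_prefix (u : iword) (v : seq bool) : Prop := occursAt u v 0.

Definition sturmian (u : iword) : Prop :=
  forall n, exists s : seq (seq bool),
    uniq s /\ size s = n.+1 /\ (forall v, (size v = n /\ factor u v) <-> v \in s).

Definition right_special (u : iword) (v : seq bool) : Prop :=
  exists a b : bool, a != b /\ factor u (rcons v a) /\ factor u (rcons v b).
Definition left_special (u : iword) (v : seq bool) : Prop :=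
  exists a b : bool, a != b /\ factor u (a :: v) /\ factor u (b :: v).
Definition bispecial (u : iword) (v : seq bool) : Prop :=
  right_special u v /\ left_special u v.

(* Image of an infinite word under a non-erasing morphism f (letterwise
   extension): position n of f(u) lies within f(u 0) ... f(u n). *)
Definition morph_iword (f : bool -> seq bool) (u : iword) : iword :=
  fun n => nth false (flatten [seq f (u j) | j <- iota 0 n.+1]) n.

Definition phi_a (x : bool) : seq bool := if x then [:: true; false] else [:: false].
Definition phi_b (x : bool) : seq bool := if x then [:: false; true] else [:: false].

Definition icons (a : bool) (u : iword) : iword := fun n => if n is m.+1 then u m else a.

Definition occs_fin (v x : seq bool) : seq nat :=
  [seq i <- iota 0 (size x).+1 | take (size v) (drop i x) == v & size v + i <= size x].

Definition return_word (u : iword) (v r : seq bool) : Prop :=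
  factor u (r ++ v) /\ occs_fin v (r ++ v) = [:: 0; size r].

Definition first_occ (u : iword) (v : seq bool) (p0 : nat) : Prop :=
  occursAt u v p0 /\ forall i, i < p0 -> ~~ occursAt u v i.

(* d is the derived word of u w.r.t. v, for the enumeration rs = r_0,...,r_K
   of all return words of v:  u = p r_{d 0} r_{d 1} ... with |p| the first
   occurrence of v. *)
Definition derived_word_wrt (u : iword) (v : seq bool) (rs : seq (seq bool))
    (d : nat -> nat) : Prop :=
  uniq rs /\ (forall r, return_word u v r <-> r \in rs) /\
  exists p0, first_occ u v p0 /\
    forall m, d m < size rs /\
      occursAt u (nth [::] rs (d m)) (p0 + \sum_(j < m) size (nth [::] rs (d j))).

Definition derived_word_is_up_to_perm (u : iword) (v : seq bool) (w : iword) : Prop :=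
  exists (rs : seq (seq bool)) (d : nat -> nat), derived_word_wrt u v rs d /\
    exists sigma : bool -> nat, injective sigma /\
      (forall i, i < size rs -> exists b, sigma b = i) /\
      (forall m, d m = sigma (w m)).

From Stdlib Require Import FunctionalExtensionality.
From mathcomp Require Import all_boot zify.
Set Implicit Arguments. Unset Strict Implicit. Unset Printing Implicit Defensive.

(** The power phi_b^k maps 0 to 0 and 1 to 0^k 1, so phi_b^k(w) is the
    concatenation of the blocks phi_b^k(w_0) phi_b^k(w_1) ...  Each block is
    0 or 0^k 1, hence every block start is followed by k zeros, and a 1 sits
    only at the end of a block: the occurrences of 0^k are exactly the block
    starts.  So the return words of 0^k are the two blocks, and coding each
    block by the letter it comes from gives back w.  A Sturmian word contains
    both letters, which provides the extensions 0^k 0, 0^k 1, 0 0^k, 1 0^k.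
    Part (2) follows by induction on k from the conjugacy
    0 phi_a(x) = phi_b(x) 0 of finite words. *)

Section Windows.
Variable u : iword.

Lemma nth_window i n j : j < n -> nth false (window u i n) j = u (i + j).
Proof. exact: nth_mkseq. Qed.

Lemma windowD i m n : window u i (m + n) = window u i m ++ window u (i + m) n.
Proof.
rewrite /window /mkseq iotaD map_cat -[0 + m]addn0 iotaDl -map_comp add0n.
by congr (_ ++ _); apply: eq_map => j /=; rewrite addnA.
Qed.

Lemma occursAtP v i :
  reflect (forall j, j < size v -> u (i + j) = nth false v j) (occursAt u v i).
Proof.
apply: (iffP eqP) => [v_at_i j lt_j|v_at_i]; first by rewrite -v_at_i nth_window.
apply: (@eq_from_nth _ false); first by rewrite size_mkseq.
by move=> j; rewrite size_mkseq => lt_j; rewrite nth_window // v_at_i.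
Qed.

Lemma occursAt_cat x y i :
  occursAt u (x ++ y) i = occursAt u x i && occursAt u y (i + size x).
Proof. by rewrite /occursAt size_cat windowD eqseq_cat // size_mkseq. Qed.

Lemma take_drop_window i n j m :
  j + m <= n -> take m (drop j (window u i n)) = window u (i + j) m.
Proof.
move=> le_jm_n; have -> : n = j + (m + (n - (j + m))) by lia.
by rewrite windowD drop_size_cat ?size_mkseq // windowD take_size_cat ?size_mkseq.
Qed.

Lemma mem_occs_fin_window v (i n j : nat) :
  (j \in occs_fin v (window u i n)) = (size v + j <= n) && occursAt u v (i + j).
Proof.
rewrite /occs_fin size_mkseq mem_filter mem_iota add0n.
have [le_vj_n|] := leqP (size v + j) n; last by rewrite andbF.
have -> : take (size v) (drop j (window u i n)) = window u (i + j) (size v).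
  by rewrite take_drop_window // addnC.
by rewrite andbT (_ : j < n.+1) ?andbT //; lia.
Qed.

Lemma return_wordP v r :
  return_word u v r <->
  exists i, [/\ occursAt u (r ++ v) i, 0 < size r &
    forall j, j <= size r -> occursAt u v (i + j) = (j == 0) || (j == size r)].
Proof.
have mem_occs i j : occursAt u (r ++ v) i ->
    (j \in occs_fin v (r ++ v)) = (j <= size r) && occursAt u v (i + j).
  move/eqP=> <-; rewrite mem_occs_fin_window size_cat.
  by congr (_ && _); lia.
split=> [[[i rv_at_i] occs_rv]|[i [rv_at_i r_gt0 occ_v]]].
  have uniq_occs : uniq (occs_fin v (r ++ v)) by apply/filter_uniq/iota_uniq.
  rewrite occs_rv /= inE andbT eq_sym -lt0n in uniq_occs.
  exists i; split=> // j le_j_r.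
  by have := mem_occs i j rv_at_i; rewrite occs_rv !inE le_j_r.
split; first by exists i.
apply: (irr_sorted_eq ltn_trans ltnn).
- by apply: sorted_filter; [exact: ltn_trans | exact: iota_ltn_sorted].
- by rewrite /= r_gt0.
move=> j; rewrite (mem_occs i j rv_at_i) !inE.
have [le_j_r|lt_r_j] := leqP j (size r); first exact: occ_v.
by apply/esym/norP; split; apply/eqP; lia.
Qed.

End Windows.

Definition morph_seq (f : bool -> seq bool) (s : seq bool) : seq bool := flatten (map f s).

Definition nonerasing (f : bool -> seq bool) : Prop := forall b, 0 < size (f b).

Lemma morph_seq_comp f g s : morph_seq g (morph_seq f s) = morph_seq (morph_seq g \o f) s.
Proof. by rewrite /morph_seq; elim: s => //= b s <-; rewrite map_cat flatten_cat. Qed.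

Section MorphicImage.
Variables (f : bool -> seq bool) (u : iword).

Definition morph_prefix (m : nat) : seq bool := morph_seq f (mkseq u m).

Definition block_start (m : nat) : nat := size (morph_prefix m).

Lemma morph_iword_prefix n : morph_iword f u n = nth false (morph_prefix n.+1) n.
Proof. by rewrite /morph_iword /morph_prefix /morph_seq /mkseq -map_comp. Qed.

Lemma morph_prefixS m : morph_prefix m.+1 = morph_prefix m ++ f (u m).
Proof. by rewrite /morph_prefix /morph_seq mkseqS map_rcons flatten_rcons. Qed.

Lemma block_startS m : block_start m.+1 = block_start m + size (f (u m)).
Proof. by rewrite /block_start morph_prefixS size_cat. Qed.

Lemma morph_prefix_prefix m n : m <= n ->
  exists s, morph_prefix n = morph_prefix m ++ s.
Proof.
move/subnKC <-; elim: (n - m) => [|d [s IHd]]; first by exists [::]; rewrite addn0 cats0.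
by exists (s ++ f (u (m + d))); rewrite addnS morph_prefixS IHd catA.
Qed.

Hypothesis f_nonerasing : nonerasing f.

Lemma block_start_ltS m : block_start m < block_start m.+1.
Proof. by rewrite block_startS -addn1 leq_add2l. Qed.

Lemma ltn_block_start : {mono block_start : m n / m < n}.
Proof. exact/leqW_mono/leq_mono/(homo_ltn ltn_trans)/block_start_ltS. Qed.

Lemma leq_block_start : {mono block_start : m n / m <= n}.
Proof. exact/leq_mono/(homo_ltn ltn_trans)/block_start_ltS. Qed.

Lemma geq_block_start m : m <= block_start m.
Proof. by elim: m => // m IHm; apply: leq_ltn_trans (block_start_ltS m). Qed.

Lemma morph_iwordE n m :
  n < block_start m -> morph_iword f u n = nth false (morph_prefix m) n.
Proof.
have nth_prefix m1 m2 : m1 <= m2 -> n < block_start m1 ->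
    nth false (morph_prefix m2) n = nth false (morph_prefix m1) n.
  by move=> /morph_prefix_prefix [s ->] lt_n; rewrite nth_cat lt_n.
move=> lt_n; rewrite morph_iword_prefix.
have [le_m|le_n] := leqP m n.+1; first by rewrite (nth_prefix m).
by rewrite [RHS](nth_prefix n.+1) ?(ltnW le_n) ?geq_block_start.
Qed.

Lemma morph_iword_block m j : j < size (f (u m)) ->
  morph_iword f u (block_start m + j) = nth false (f (u m)) j.
Proof.
move=> lt_j; rewrite (@morph_iwordE _ m.+1); last by rewrite block_startS ltn_add2l.
by rewrite morph_prefixS nth_cat ltnNge leq_addr addKn.
Qed.

Lemma occursAt_block m : occursAt (morph_iword f u) (f (u m)) (block_start m).
Proof.
apply/eqP/(@eq_from_nth _ false); rewrite size_mkseq // => j lt_j.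
by rewrite nth_mkseq // morph_iword_block.
Qed.

Lemma block_start_between m m' :
  block_start m <= block_start m' <= block_start m.+1 -> m' = m \/ m' = m.+1.
Proof. by rewrite !leq_block_start; lia. Qed.

Lemma block_cover n : exists m, block_start m <= n < block_start m.+1.
Proof.
elim: n => [|n [m /andP [le_m lt_m]]]; first by exists 0; exact: block_start_ltS.
have [lt_Sn|le_Sn] := ltnP n.+1 (block_start m.+1); first by exists m; rewrite lt_Sn andbT ltnW.
by exists m.+1; rewrite le_Sn (leq_trans _ (block_start_ltS m.+1)) // ltnS.
Qed.

Lemma block_start_sum m : block_start m = \sum_(j < m) size (f (u j)).
Proof. by elim: m => [|m IHm]; rewrite ?big_ord0 // big_ord_recr block_startS IHm. Qed.

Lemma mkseq_morph_iword m : mkseq (morph_iword f u) (block_start m) = morph_prefix m.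
Proof.
apply: (@eq_from_nth _ false); rewrite size_mkseq // => j lt_j.
by rewrite nth_mkseq // (morph_iwordE lt_j).
Qed.

End MorphicImage.

Lemma morph_iword_comp f g u : nonerasing f -> nonerasing g ->
  morph_iword g (morph_iword f u) = morph_iword (morph_seq g \o f) u.
Proof.
move=> f_ne g_ne; apply: functional_extensionality => n.
set N := block_start f u n.+1.
have prefix_gfu : morph_prefix g (morph_iword f u) N = morph_prefix (morph_seq g \o f) u n.+1.
  by rewrite /morph_prefix mkseq_morph_iword // morph_seq_comp.
have lt_n_N : n < N by exact: geq_block_start.
rewrite (@morph_iwordE _ _ g_ne _ N) ?prefix_gfu ?morph_iword_prefix //.
exact: leq_trans lt_n_N (geq_block_start _ g_ne N).
Qed.

Lemma morph_iword_letter u : morph_iword (fun b => [:: b]) u = u.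
Proof.
apply: functional_extensionality => n.
by rewrite morph_iword_prefix /morph_prefix /morph_seq flatten_seq1 nth_mkseq.
Qed.

Lemma phi_b_nonerasing : nonerasing phi_b. Proof. by case. Qed.

Definition phi_b_pow (k : nat) (b : bool) : seq bool :=
  if b then nseq k false ++ [:: true] else [:: false].

Lemma phi_b_pow_nonerasing k : nonerasing (phi_b_pow k).
Proof. by case=> //=; rewrite size_cat addn1. Qed.

Lemma phi_b_powS k : morph_seq phi_b \o phi_b_pow k = phi_b_pow k.+1.
Proof.
apply: functional_extensionality => -[] //=.
by rewrite /morph_seq; elim: k => //= k ->.
Qed.

Lemma iter_phi_b k w : iter k (morph_iword phi_b) w = morph_iword (phi_b_pow k) w.
Proof.
elim: k => [|k IHk].
  have -> : phi_b_pow 0 = fun b => [:: b] by apply: functional_extensionality; case.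
  by rewrite morph_iword_letter.
rewrite iterS IHk morph_iword_comp ?phi_b_powS //.
  exact: phi_b_pow_nonerasing.
exact: phi_b_nonerasing.
Qed.

Section PhiBPowImage.
Variables (k : nat) (w : iword).
Local Notation u := (morph_iword (phi_b_pow k) w).
Local Notation pos := (block_start (phi_b_pow k) w).
Local Notation zeros := (nseq k false).
Let ne := phi_b_pow_nonerasing k.

Lemma block_start_phi_b_pow_true m : w m -> pos m.+1 = pos m + k.+1.
Proof. by move=> w_m; rewrite block_startS w_m size_cat size_nseq addn1. Qed.

Lemma phi_b_pow_image_true n : u n -> exists2 m, w m & n = pos m + k.
Proof.
move=> u_n; have [m /andP [le_m lt_m]] := block_cover w ne n.
rewrite block_startS in lt_m.
have lt_j : n - pos m < size (phi_b_pow k (w m)) by lia.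
have := morph_iword_block ne lt_j; rewrite subnKC // u_n.
case w_m: (w m) lt_j => /=; last by case: (n - pos m).
rewrite size_cat nth_cat size_nseq nth_nseq addn1 ltnS.
by move=> le_jk; case: ltnP => // le_kj _; exists m => //; lia.
Qed.

Lemma occursAt_zeros_block m : occursAt u zeros (pos m).
Proof.
apply/occursAtP => j; rewrite size_nseq nth_nseq => lt_jk; rewrite lt_jk.
apply/negbTE/negP => /phi_b_pow_image_true [m' w_m' e].
have lt_m'm : m' < m by rewrite -(ltn_block_start w ne); lia.
have : pos m'.+1 <= pos m by rewrite leq_block_start.
by rewrite block_start_phi_b_pow_true //; lia.
Qed.

Lemma occursAt_zerosP i : occursAt u zeros i <-> exists m, i = pos m.
Proof.
split=> [zeros_at_i|[m ->]]; last exact: occursAt_zeros_block.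
have [m /andP [le_m lt_m]] := block_cover w ne i.
have [->|ne_i] := eqVneq i (pos m); first by exists m.
have w_m : w m by move: lt_m; rewrite block_startS; case: (w m) => //=; lia.
have lt_k : k < size (phi_b_pow k (w m)) by rewrite w_m size_cat size_nseq addn1.
have := morph_iword_block ne lt_k; rewrite w_m nth_cat size_nseq ltnn subnn /=.
rewrite block_start_phi_b_pow_true // in lt_m.
have lt_ji : pos m + k - i < size zeros by rewrite size_nseq; lia.
move/occursAtP/(_ _ lt_ji): zeros_at_i; rewrite nth_nseq if_same subnKC; last lia.
by move=> ->.
Qed.

Lemma return_word_phi_b_powP r :
  return_word u zeros r <-> exists m, r = phi_b_pow k (w m).
Proof.
rewrite return_wordP; split=> [[i [rz_at_i r_gt0 zeros_in]]|[m ->]].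
  have [m i_pos] : exists m, i = pos m.
    by apply/occursAt_zerosP; rewrite -[i]addn0 zeros_in.
  have [m' end_pos] : exists m', i + size r = pos m'.
    by apply/occursAt_zerosP; rewrite zeros_in // eqxx orbT.
  have lt_Sm_m' : pos m.+1 <= pos m'.
    by rewrite leq_block_start // -(ltn_block_start w ne); lia.
  have end_Sm : i + size r = pos m.+1.
    apply/eqP; rewrite eqn_leq end_pos lt_Sm_m' andbT leqNgt; apply/negP => lt_Sm.
    have lt_m_Sm := block_start_ltS w ne m.
    by have := zeros_in (pos m.+1 - i); rewrite subnKC ?occursAt_zeros_block; lia.
  have size_r : size r = size (phi_b_pow k (w m)).
    by move: end_Sm; rewrite i_pos block_startS; lia.
  move: rz_at_i; rewrite occursAt_cat i_pos => /andP [r_at_pos _].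
  by exists m; rewrite -(eqP r_at_pos) size_r (eqP (occursAt_block w ne m)).
exists (pos m); split; [|exact: ne|].
  by rewrite occursAt_cat (occursAt_block w ne) -block_startS occursAt_zeros_block.
move=> j le_j; apply/idP/idP => [/occursAt_zerosP [m' e]|/orP [] /eqP ->].
- have /(block_start_between ne) [] : pos m <= pos m' <= pos m.+1.
    by rewrite block_startS; lia.
  + by move=> em; rewrite em in e; rewrite (_ : j = 0) //; lia.
  + move=> em; rewrite em block_startS in e.
    by rewrite (_ : j = size (phi_b_pow k (w m))) ?eqxx ?orbT //; lia.
- by rewrite addn0 occursAt_zeros_block.
- by rewrite -block_startS occursAt_zeros_block.
Qed.

Hypothesis w_letters : forall b, exists m, w m = b.

Lemma factor_zeros_succ : factor u (nseq k.+1 false).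
Proof.
have [m w_m] := w_letters false; exists (pos m).
have := occursAt_block w ne m; rewrite w_m => zero_at_m.
rewrite (_ : nseq k.+1 false = [:: false] ++ zeros) // occursAt_cat zero_at_m.
by have := occursAt_zeros_block m.+1; rewrite block_startS w_m.
Qed.

Lemma factor_one_zeros : factor u (true :: zeros).
Proof.
have [m w_m] := w_letters true; exists (pos m + k).
have := occursAt_block w ne m; rewrite w_m occursAt_cat size_nseq => /andP [_ one_at].
rewrite -cat1s occursAt_cat one_at /=.
by have := occursAt_zeros_block m.+1; rewrite block_start_phi_b_pow_true ?w_m // addnS addn1.
Qed.

Lemma bispecial_zeros : bispecial u zeros.
Proof.
split; exists false, true; split=> //; split; try exact: factor_zeros_succ.
- by rewrite -cats1 -(nseqD k 1) addn1; exact: factor_zeros_succ.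
- have [m w_m] := w_letters true; exists (pos m).
  by have := occursAt_block w ne m; rewrite w_m /= cats1.
- exact: factor_one_zeros.
Qed.

Lemma derived_word_zeros : derived_word_is_up_to_perm u zeros w.
Proof.
set rs := [:: phi_b_pow k false; phi_b_pow k true].
have nth_rs (b : bool) : nth [::] rs b = phi_b_pow k b by case: b.
exists rs, (fun m => nat_of_bool (w m)); split; last first.
  exists nat_of_bool; split; first by case=> [] [].
  by split=> // -[|[|i]] // _; [exists false | exists true].
split.
  rewrite /= inE andbT; apply/eqP => /(congr1 (last true)).
  by rewrite /= last_cat.
split.
  move=> r; rewrite return_word_phi_b_powP !inE; split=> [[m ->]|].
    by case: (w m); rewrite eqxx ?orbT.
  by case/orP=> /eqP ->;
    [have [m <-] := w_letters false | have [m <-] := w_letters true]; exists m.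
exists 0; split; first by split=> //; exact: (occursAt_zeros_block 0).
move=> m; split; first by case: (w m).
rewrite add0n (eq_bigr (fun j : 'I_m => size (phi_b_pow k (w j)))) => [|j _].
  by rewrite -block_start_sum nth_rs occursAt_block.
by rewrite nth_rs.
Qed.

End PhiBPowImage.

Lemma sturmian_letter w b : sturmian w -> exists m, w m = b.
Proof.
move=> /(_ 1) [[|x [|y [|? ?]]] [uniq_s [//= _ factors]]].
have [[size_x [i x_at_i]] [size_y [j y_at_j]]] :
    (size x = 1 /\ factor w x) /\ (size y = 1 /\ factor w y).
  by split; apply/factors; rewrite !inE eqxx ?orbT.
move: uniq_s x_at_i y_at_j; rewrite /occursAt size_x size_y /= inE andbT.
move=> ne_xy /eqP x_def /eqP y_def; rewrite -x_def -y_def /window /mkseq /= !addn0 in ne_xy.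
have [<-|ne_ib] := eqVneq (w i) b; first by exists i.
by exists j; move: ne_xy ne_ib; case: (w i); case: (w j); case: b.
Qed.

Lemma phi_a_phi_b_conj s : false :: morph_seq phi_a s = morph_seq phi_b s ++ [:: false].
Proof. by rewrite /morph_seq; elim: s => //= -[] s /= ->. Qed.

Lemma mkseq_icons a v n : mkseq (icons a v) n.+1 = a :: mkseq v n.
Proof.
apply: (@eq_from_nth _ false) => [|j]; first by rewrite size_mkseq /= size_map size_iota.
rewrite size_mkseq => lt_j; rewrite nth_mkseq //.
by case: j lt_j => //= j lt_j; rewrite nth_mkseq.
Qed.

Lemma morph_phi_a_icons v :
  morph_iword phi_a (icons true v) = icons true (morph_iword phi_b v).
Proof.
apply: functional_extensionality => -[|n] //=.
rewrite !morph_iword_prefix /morph_prefix mkseq_icons.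
change (nth false (false :: morph_seq phi_a (mkseq v n.+1)) n =
        nth false (morph_seq phi_b (mkseq v n.+1)) n).
by rewrite phi_a_phi_b_conj nth_cat (geq_block_start v phi_b_nonerasing n.+1).
Qed.

Lemma iter_phi_a_icons k v :
  iter k (morph_iword phi_a) (icons true v) = icons true (iter k (morph_iword phi_b) v).
Proof. by elim: k => //= k ->; rewrite morph_phi_a_icons. Qed.

Theorem corollary16 (w : iword) (k : nat) :
  sturmian w ->
  (let u := iter k (morph_iword phi_b) w in
     is_prefix u (nseq k false) /\ bispecial u (nseq k false) /\
     derived_word_is_up_to_perm u (nseq k false) w) /\
  (sturmian (icons true w) ->
     iter k (morph_iword phi_a) (icons true w) = icons true (iter k (morph_iword phi_b) w)).
Proof.
move=> sturmian_w; split; last by move=> _; exact: iter_phi_a_icons.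
have w_letters b := sturmian_letter b sturmian_w.
rewrite /= iter_phi_b; split; first exact: (occursAt_zeros_block k w 0).
by split; [exact: bispecial_zeros | exact: derived_word_zeros].
Qed.
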